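(* Let $m,u\in\mathbb{Q}$ with $m>0$, $u>0$, $mu<1$, and put $n=m(m^2+1)\bigl(2u-m(u^2-1)\bigr)$. Define $$Q_{m,u}(t)=4m\,(mu^2-m-2u)\,(mt^2-2t-m)\Bigl[(mu^2-m-2u)t^2+(-4mu-2u^2+2)t-mu^2+m+2u\Bigr].$$ (i) Sending a triangle to the rational angle parameter $t$ of its angle $\alpha$ gives a bijection between hyperbolic Heron triangles (up to congruence respecting the labelling of vertices) whose area has rational parameter $m$ and whose angle $\beta$ has rational parameter $u$, and the rational numbers $t$ with $$0<t<\frac{1-mu}{m+u}\qquad\text{(condition (A))}$$ for which $Q_{m,u}(t)=w^2$ for some rational $w>0$. Here $w=(m^2+1)(u^2+1)(t^2+1)\,\sinh(a)\sin(\beta)\sin(\gamma)$. (ii) The affine curve $w^2=Q_{m,u}(t)$ is birational over $\mathbb{Q}$ to the elliptic curve $$E_{m,u}:\ y^2=x\,(x-n)\,\bigl(x-n(u^2+1)\bigr),$$ via a birational map under which $$x=\frac{2u-m(u^2-1)}{4t^2}\Bigl[-4(mu-1)(m+u)mt+2(m^2u^2+m^2-2mu+2)mt^2+2\bigl(2u-m(u^2-1)\bigr)m^2+mw\Bigr],$$ $$t=-\frac{m\bigl(2u-m(u^2-1)\bigr)\bigl(x-(m+u)^2(m^2+1)\bigr)}{y+(m+u)(1-mu)(x-n)}.$$ Consequently these hyperbolic Heron triangles are in one-to-one correspondence with the rational points $(x,y)$ of $E_{m,u}$ off the line $y+(m+u)(1-mu)(x-n)=0$ that satisfy condition (A) for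 the value of $t$ above (together with the sign condition corresponding to $w>0$), with at most one further explicit point of $E_{m,u}$, namely $P=\bigl((m^2+1)(m+u)^2,\;u^2(m^2+1)^2(m+u)(mu-1)\bigr)$, possibly arising from the line.
   Context: All triangles are non-degenerate, bounded triangles in the hyperbolic plane (curvature $-1$), with side lengths $a,b,c>0$, opposite angles $\alpha,\beta,\gamma>0$, and area $A=\pi-\alpha-\beta-\gamma$. A length $x$ is called rational if $e^x\in\mathbb{Q}$; an angle or area $x$ is called rational if $e^{ix}\in\mathbb{Q}[i]$, i.e. $\cos x,\sin x\in\mathbb{Q}$. A hyperbolic Heron triangle is one with $e^a,e^b,e^c\in\mathbb{Q}$ and $e^{i\alpha},e^{i\beta},e^{i\gamma},e^{iA}\in\mathbb{Q}[i]$. For a rational angle or area $x\in(0,\pi)$, its rational parameter is the unique $t\in\mathbb{Q}$, $t>0$, with $\cos x=\frac{1-t^2}{1+t^2}$ and $\sin x=\frac{2t}{1+t^2}$ (i.e. $t=\tan(x/2)$); ''rational area $m$'' means the area has rational parameter $m$, and ''rational angle $u$'' means the angle has rational parameter $u$. *)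

From Stdlib Require Import Reals QArith Qreals.
Open Scope R_scope.

Definition IsRatR (x : R) : Prop := exists q : Q, x = Q2R q.

(** rational length: e^x in Q ; rational angle/area: e^{ix} in Q[i] *)
Definition rat_len (x : R) : Prop := IsRatR (exp x).
Definition rat_ang (x : R) : Prop := IsRatR (cos x) /\ IsRatR (sin x).

(** A (labelled) hyperbolic triangle up to congruence is given by its side
    lengths (a,b,c) (SSS), which must satisfy the strict triangle
    inequalities. *)
Definition htri (a b c : R) : Prop :=
  0 < a /\ 0 < b /\ 0 < c /\ a < b + c /\ b < c + a /\ c < a + b.

(** Angle opposite the side x, the other two sides being y and z
    (hyperbolic law of cosines, curvature -1). *)
Definition hangle (x y z : R) : R :=
  acos ((cosh y * cosh z - cosh x) / (sinh y * sinh z)).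

Definition alpha (a b c : R) : R := hangle a b c.
Definition beta  (a b c : R) : R := hangle b c a.
Definition gamma (a b c : R) : R := hangle c a b.
Definition harea (a b c : R) : R := PI - alpha a b c - beta a b c - gamma a b c.

Definition rparam (x : R) : R := tan (x / 2).

Definition heron (a b c : R) : Prop :=
  htri a b c /\ rat_len a /\ rat_len b /\ rat_len c /\
  rat_ang (alpha a b c) /\ rat_ang (beta a b c) /\ rat_ang (gamma a b c) /\
  rat_ang (harea a b c).

Definition heron_mu (m u a b c : R) : Prop :=
  heron a b c /\ rparam (harea a b c) = m /\ rparam (beta a b c) = u.

Definition condA (m u t : R) : Prop := 0 < t /\ t < (1 - m * u) / (m + u).

Definition Qmu (m u t : R) : R :=
  4 * m * (m * u ^ 2 - m - 2 * u) * (m * t ^ 2 - 2 * t - m) *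
  ((m * u ^ 2 - m - 2 * u) * t ^ 2 + (- 4 * m * u - 2 * u ^ 2 + 2) * t
   - m * u ^ 2 + m + 2 * u).

Definition wtri (m u a b c : R) : R :=
  (m ^ 2 + 1) * (u ^ 2 + 1) * (rparam (alpha a b c) ^ 2 + 1) *
  sinh a * sin (beta a b c) * sin (gamma a b c).

Definition Kmu (m u : R) : R := 2 * u - m * (u ^ 2 - 1).
Definition nmu (m u : R) : R := m * (m ^ 2 + 1) * Kmu m u.

Definition onE (m u x y : R) : Prop :=
  y ^ 2 = x * (x - nmu m u) * (x - nmu m u * (u ^ 2 + 1)).

Definition lineL (m u x y : R) : R := y + (m + u) * (1 - m * u) * (x - nmu m u).

(** x-coordinate of P *)
Definition cmu (m u : R) : R := (m ^ 2 + 1) * (m + u) ^ 2.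

(** the birational map (t,w) |-> (x,y) : x as in the paper, y obtained by
    solving the paper's formula for t with respect to y *)
Definition xfun (m u t w : R) : R :=
  Kmu m u / (4 * t ^ 2) *
  (- 4 * (m * u - 1) * (m + u) * m * t
   + 2 * (m ^ 2 * u ^ 2 + m ^ 2 - 2 * m * u + 2) * m * t ^ 2
   + 2 * Kmu m u * m ^ 2 + m * w).
Definition yfun (m u t w : R) : R :=
  - m * Kmu m u * (xfun m u t w - cmu m u) / t
  - (m + u) * (1 - m * u) * (xfun m u t w - nmu m u).

(** the inverse map (x,y) |-> (t,w): t as in the paper, w obtained by
    solving the paper's formula for x with respect to w *)
Definition tfun (m u x y : R) : R :=
  - (m * Kmu m u * (x - cmu m u)) / lineL m u x y.
Definition wfun (m u x y : R) : R :=
  let t := tfun m u x y in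
  (4 * t ^ 2 * x / Kmu m u + 4 * (m * u - 1) * (m + u) * m * t
   - 2 * (m ^ 2 * u ^ 2 + m ^ 2 - 2 * m * u + 2) * m * t ^ 2
   - 2 * Kmu m u * m ^ 2) / m.

Definition Px (m u : R) : R := (m ^ 2 + 1) * (m + u) ^ 2.
Definition Py (m u : R) : R := u ^ 2 * (m ^ 2 + 1) ^ 2 * (m + u) * (m * u - 1).

Definition Fx (m u a b c : R) : R :=
  xfun m u (rparam (alpha a b c)) (wtri m u a b c).
Definition Fy (m u a b c : R) : R :=
  yfun m u (rparam (alpha a b c)) (wtri m u a b c).

Definition good_point (m u x y : R) : Prop :=
  IsRatR x /\ IsRatR y /\ onE m u x y /\ lineL m u x y <> 0 /\
  condA m u (tfun m u x y) /\ 0 < wfun m u x y.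

From Stdlib Require Import Reals QArith Qreals Lra.
Open Scope R_scope.

(* A hyperbolic triangle is described through the half-angle tangents t, u, s
   of its angles.  The dual law of cosines
     cosh a sin(beta) sin(gamma) = cos(alpha) + cos(beta) cos(gamma)
   gives the sides as rational functions chA of (t, u, s), and the area
   parameter m forces s = sfun m u t.  Hence a Heron triangle is determined by
   t, t satisfies condition (A), and w = (m^2+1)(u^2+1)(t^2+1) sinh a sin(beta)
   sin(gamma) satisfies w^2 = Q(t).  Conversely, from rational t with (A) and
   w > 0 with w^2 = Q(t), the sides acosh (chA ...) form a triangle with the
   prescribed angles, and w makes sinh of the sides (hence exp of the sides)
   rational.  Part (ii) rests on one "chord identity": the line of parameter t
   through the point P of E meets E again exactly where (x - xbase)^2 =
   xslope^2 Q(t), with x = xbase + xslope w. *)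

Lemma rat_add x y : IsRatR x -> IsRatR y -> IsRatR (x + y).
Proof. intros [p ->] [q ->]. exists (p + q)%Q. now rewrite Q2R_plus. Qed.

Lemma rat_mul x y : IsRatR x -> IsRatR y -> IsRatR (x * y).
Proof. intros [p ->] [q ->]. exists (p * q)%Q. now rewrite Q2R_mult. Qed.

Lemma rat_opp x : IsRatR x -> IsRatR (- x).
Proof. intros [p ->]. exists (- p)%Q. now rewrite Q2R_opp. Qed.

Lemma rat_sub x y : IsRatR x -> IsRatR y -> IsRatR (x - y).
Proof. intros [p ->] [q ->]. exists (p - q)%Q. now rewrite Q2R_minus. Qed.

Lemma rat_inv x : IsRatR x -> IsRatR (/ x).
Proof.
  intros [p ->]. exists (/ p)%Q. rewrite RMicromega.Q2R_inv_ext.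
  destruct (Qeq_bool p 0) eqn:E; [|reflexivity].
  apply Qeq_bool_eq, Qeq_eqR in E. now rewrite E, RMicromega.Q2R_0, Rinv_0.
Qed.

Lemma rat_div x y : IsRatR x -> IsRatR y -> IsRatR (x / y).
Proof. intros. apply rat_mul; [|apply rat_inv]; assumption. Qed.

Lemma rat_pow x n : IsRatR x -> IsRatR (x ^ n).
Proof.
  intros H. induction n as [|n IH]; simpl; [|now apply rat_mul].
  exists 1%Q. unfold Q2R; simpl. field.
Qed.

Lemma rat_IZR z : IsRatR (IZR z).
Proof. exists (inject_Z z). unfold Q2R; simpl. field. Qed.

Ltac rational := repeat first
  [ assumption | apply rat_IZR | apply rat_add | apply rat_mul | apply rat_sub
  | apply rat_opp | apply rat_div | apply rat_inv | apply rat_pow ].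

Definition cT (t : R) : R := (1 - t ^ 2) / (1 + t ^ 2).
Definition sT (t : R) : R := 2 * t / (1 + t ^ 2).

Lemma rat_cT t : IsRatR t -> IsRatR (cT t).
Proof. intros. unfold cT. rational. Qed.

Lemma rat_sT t : IsRatR t -> IsRatR (sT t).
Proof. intros. unfold sT. rational. Qed.

Lemma cT_gt_m1 t : -1 < cT t.
Proof.
  unfold cT. apply Rlt_0_minus.
  replace ((1 - t ^ 2) / (1 + t ^ 2) - -1) with (2 / (1 + t ^ 2)) by (field; nra).
  apply Rdiv_lt_0_compat; nra.
Qed.

Lemma sT_pos t : 0 < t -> 0 < sT t.
Proof. intros. unfold sT. apply Rdiv_lt_0_compat; nra. Qed.

Lemma double_angle_tan x : cos x <> 0 ->
  cos (2 * x) = cT (tan x) /\ sin (2 * x) = sT (tan x).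
Proof.
  intros H. pose proof (sin2_cos2 x) as E. unfold Rsqr in E.
  rewrite cos_2a, sin_2a. unfold cT, sT, tan.
  assert (E2 : 1 + (sin x / cos x) ^ 2 = 1 / cos x ^ 2).
  { replace 1 with (sin x * sin x + cos x * cos x) at 2 by exact E. field. auto. }
  split; rewrite E2; field; auto.
Qed.

Lemma half_angle th : 0 < th < PI ->
  0 < tan (th / 2) /\ cos th = cT (tan (th / 2)) /\ sin th = sT (tan (th / 2)).
Proof.
  intros H. assert (0 < cos (th / 2)) by (apply cos_gt_0; lra).
  assert (0 < sin (th / 2)) by (apply sin_gt_0; lra).
  destruct (double_angle_tan (th / 2)) as [h1 h2]; [lra|].
  replace (2 * (th / 2)) with th in h1, h2 by field.
  repeat split; auto. unfold tan. now apply Rdiv_lt_0_compat.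
Qed.

Lemma double_atan x : cos (2 * atan x) = cT x /\ sin (2 * atan x) = sT x.
Proof.
  rewrite <- (tan_atan x) at 2 4. apply double_angle_tan.
  apply Rgt_not_eq, cos_gt_0; pose proof (atan_bound x); lra.
Qed.

Lemma atan_pos x : 0 < x -> 0 < atan x < PI / 2.
Proof.
  intros H. pose proof (atan_increasing 0 x H). rewrite atan_0 in *.
  pose proof (atan_bound x). lra.
Qed.

Definition ch (X : R) : R := (X ^ 2 + 1) / (2 * X).
Definition sh (X : R) : R := (X ^ 2 - 1) / (2 * X).

Lemma cosh_ch x : cosh x = ch (exp x).
Proof.
  unfold cosh, ch. rewrite exp_Ropp. pose proof (exp_pos x). field. lra.
Qed.

Lemma sinh_sh x : sinh x = sh (exp x).
Proof.
  unfold sinh, sh. rewrite exp_Ropp. pose proof (exp_pos x). field. lra.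
Qed.

Lemma cosh_plus x y : cosh (x + y) = cosh x * cosh y + sinh x * sinh y.
Proof.
  rewrite !cosh_ch, !sinh_sh, exp_plus. unfold ch, sh.
  pose proof (exp_pos x). pose proof (exp_pos y). field. lra.
Qed.

Lemma cosh_minus x y : cosh (x - y) = cosh x * cosh y - sinh x * sinh y.
Proof.
  rewrite !cosh_ch, !sinh_sh. unfold Rminus. rewrite exp_plus, exp_Ropp. unfold ch, sh.
  pose proof (exp_pos x). pose proof (exp_pos y). field. lra.
Qed.

Lemma sinh_sq x : sinh x ^ 2 = cosh x ^ 2 - 1.
Proof. rewrite cosh_ch, sinh_sh. unfold ch, sh. pose proof (exp_pos x). field. lra. Qed.

Lemma sinh_pos x : 0 < x -> 0 < sinh x.
Proof. intros. rewrite <- sinh_0. now apply sinh_lt. Qed.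

Lemma cosh_lt x y : 0 <= x -> x < y -> cosh x < cosh y.
Proof.
  intros Hx Hxy. rewrite !cosh_ch. unfold ch.
  assert (1 <= exp x) by (rewrite <- exp_0; destruct Hx as [Hx| <-];
    [left; now apply exp_increasing | lra]).
  assert (exp x < exp y) by now apply exp_increasing.
  apply Rlt_0_minus.
  replace ((exp y ^ 2 + 1) / (2 * exp y) - (exp x ^ 2 + 1) / (2 * exp x))
    with ((exp y - exp x) * (exp x * exp y - 1) / (2 * exp x * exp y)) by (field; lra).
  assert (0 < exp x * exp y - 1) by nra.
  apply Rdiv_lt_0_compat; nra.
Qed.

Lemma cosh_gt1 x : 0 < x -> 1 < cosh x.
Proof. intros. rewrite <- cosh_0. apply cosh_lt; lra. Qed.

Lemma cosh_abs_lt x y : Rabs x < y -> cosh x < cosh y.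
Proof.
  intros H. destruct (Rcase_abs x) as [Hx|Hx].
  - rewrite Rabs_left in H by lra.
    replace (cosh x) with (cosh (- x)) by (unfold cosh; rewrite Ropp_involutive; lra).
    apply cosh_lt; lra.
  - rewrite Rabs_right in H by lra. apply cosh_lt; lra.
Qed.

Lemma cosh_inj x y : 0 <= x -> 0 <= y -> cosh x = cosh y -> x = y.
Proof.
  intros Hx Hy H. destruct (Rtotal_order x y) as [h|[h|h]]; auto.
  - pose proof (cosh_lt x y Hx h); lra.
  - pose proof (cosh_lt y x Hy h); lra.
Qed.

(* The inverse of cosh on (1, +oo); its exponential is rational when
   C and sqrt (C^2 - 1) are. *)
Definition acosh (C : R) : R := ln (C + sqrt (C ^ 2 - 1)).

Lemma acosh_spec C : 1 < C ->
  0 < acosh C /\ cosh (acosh C) = C /\ sinh (acosh C) = sqrt (C ^ 2 - 1) /\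
  exp (acosh C) = C + sqrt (C ^ 2 - 1).
Proof.
  intros H. assert (HS : 0 <= C ^ 2 - 1) by nra.
  pose proof (sqrt_pos (C ^ 2 - 1)). pose proof (pow2_sqrt _ HS).
  assert (E : exp (acosh C) = C + sqrt (C ^ 2 - 1)) by (apply exp_ln; lra).
  set (S := sqrt (C ^ 2 - 1)) in *.
  repeat split; auto.
  - unfold acosh. fold S. rewrite <- ln_1. apply ln_increasing; lra.
  - rewrite cosh_ch, E. unfold ch.
    replace ((C + S) ^ 2 + 1) with (2 * C * (C + S)) by nra. field. lra.
  - rewrite sinh_sh, E. unfold sh.
    replace ((C + S) ^ 2 - 1) with (2 * S * (C + S)) by nra. field. lra.
Qed.

Definition lawcos (x y z : R) : R := (cosh y * cosh z - cosh x) / (sinh y * sinh z).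

Lemma htri_rot a b c : htri a b c -> htri b c a.
Proof. unfold htri; lra. Qed.

Lemma lawcos_bounds a b c : htri a b c -> -1 < lawcos a b c < 1.
Proof.
  intros (Ha & Hb & Hc & H1 & H2 & H3).
  assert (Hp : 0 < sinh b * sinh c) by (apply Rmult_lt_0_compat; apply sinh_pos; lra).
  assert (cosh a < cosh (b + c)) by (apply cosh_lt; lra).
  assert (cosh (b - c) < cosh a) by (apply cosh_abs_lt; unfold Rabs; destruct Rcase_abs; lra).
  rewrite cosh_plus, cosh_minus in *. unfold lawcos.
  split; apply (Rmult_lt_reg_r (sinh b * sinh c)); auto;
    unfold Rdiv; rewrite Rmult_assoc, Rinv_l by lra; lra.
Qed.

Lemma angle_cos_sin a b c : htri a b c ->
  cos (hangle a b c) = lawcos a b c /\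
  sin (hangle a b c) = sqrt (1 - lawcos a b c ^ 2) /\ 0 < hangle a b c < PI.
Proof.
  intros H. pose proof (lawcos_bounds a b c H).
  change (hangle a b c) with (acos (lawcos a b c)).
  rewrite cos_acos, sin_acos by lra. unfold Rsqr.
  replace (lawcos a b c ^ 2) with (lawcos a b c * lawcos a b c) by ring.
  repeat split; try apply acos_bound_lt; lra.
Qed.

Definition kk (X Y Z : R) : R := (ch Y * ch Z - ch X) / (sh Y * sh Z).

Lemma lawcos_kk a b c : lawcos a b c = kk (exp a) (exp b) (exp c).
Proof. unfold lawcos, kk. now rewrite !cosh_ch, !sinh_sh. Qed.

(* The two algebraic identities behind the dual law of cosines. *)
Lemma kk_dual_sq X Y Z : 1 < X -> 1 < Y -> 1 < Z ->
  ((kk X Y Z + kk Y Z X * kk Z X Y) / ch X) ^ 2 = (1 - kk Y Z X ^ 2) * (1 - kk Z X Y ^ 2).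
Proof. intros. unfold kk, ch, sh. field. repeat split; nra. Qed.

Lemma kk_dual_nonneg X Y Z : 1 < X -> 1 < Y -> 1 < Z -> -1 < kk X Y Z < 1 ->
  0 <= kk X Y Z + kk Y Z X * kk Z X Y.
Proof.
  intros HX HY HZ Hk.
  assert (E : kk X Y Z + kk Y Z X * kk Z X Y =
              ch X * (1 - kk X Y Z ^ 2) * sh Y * sh Z / sh X ^ 2)
    by (unfold kk, ch, sh; field; repeat split; nra).
  assert (0 < ch X) by (unfold ch; apply Rdiv_lt_0_compat; nra).
  assert (0 < sh X) by (unfold sh; apply Rdiv_lt_0_compat; nra).
  assert (0 < sh Y) by (unfold sh; apply Rdiv_lt_0_compat; nra).
  assert (0 < sh Z) by (unfold sh; apply Rdiv_lt_0_compat; nra).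
  assert (0 < 1 - kk X Y Z ^ 2) by nra.
  rewrite E. left. apply Rdiv_lt_0_compat; [|nra].
  apply Rmult_lt_0_compat; [apply Rmult_lt_0_compat; [apply Rmult_lt_0_compat|]|];
    assumption.
Qed.

Lemma dual_law a b c : htri a b c ->
  cosh a * sin (beta a b c) * sin (gamma a b c) =
  cos (alpha a b c) + cos (beta a b c) * cos (gamma a b c).
Proof.
  intros H. pose proof (htri_rot _ _ _ H) as H'. pose proof (htri_rot _ _ _ H') as H''.
  destruct (angle_cos_sin _ _ _ H) as (c1 & _ & _).
  destruct (angle_cos_sin _ _ _ H') as (c2 & s2 & _).
  destruct (angle_cos_sin _ _ _ H'') as (c3 & s3 & _).
  pose proof (lawcos_bounds _ _ _ H) as k1.
  pose proof (lawcos_bounds _ _ _ H') as k2.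
  pose proof (lawcos_bounds _ _ _ H'') as k3.
  unfold alpha, beta, gamma. rewrite c1, c2, c3, s2, s3, Rmult_assoc, <- sqrt_mult by nra.
  destruct H as (Ha & Hb & Hc & _).
  rewrite !lawcos_kk, cosh_ch in *.
  assert (1 < exp a) by (rewrite <- exp_0; now apply exp_increasing).
  assert (1 < exp b) by (rewrite <- exp_0; now apply exp_increasing).
  assert (1 < exp c) by (rewrite <- exp_0; now apply exp_increasing).
  assert (0 < ch (exp a)) by (unfold ch; apply Rdiv_lt_0_compat; nra).
  rewrite <- kk_dual_sq by assumption. rewrite sqrt_pow2.
  - field. lra.
  - apply Rle_mult_inv_pos; [now apply kk_dual_nonneg | lra].
Qed.

(* By the dual law of cosines, cosh of the side opposite an angle with
   half-angle tangent x is chA x y z, y and z being those of the other angles. *)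
Definition chA (x y z : R) : R := (cT x + cT y * cT z) / (sT y * sT z).

(* chA x y z > 1 iff a product of two explicit factors is positive; the first
   factor, symmetric in x y z, is positive iff the angle sum is below pi. *)
Lemma chA_gt1_iff x y z : 0 < y -> 0 < z ->
  1 < chA x y z <-> 0 < (1 - x*y - y*z - z*x) * (1 - y*z + x*y + x*z).
Proof.
  intros hy hz. pose proof (sT_pos y hy). pose proof (sT_pos z hz).
  set (Dn := (1 + x^2) * (1 + y^2) * (1 + z^2) * (sT y * sT z)).
  assert (HD : 0 < Dn).
  { unfold Dn. apply Rmult_lt_0_compat; [|now apply Rmult_lt_0_compat].
    repeat apply Rmult_lt_0_compat; nra. }
  assert (E : (1 - x*y - y*z - z*x) * (1 - y*z + x*y + x*z) = (chA x y z - 1) * Dn / 2).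
  { unfold Dn, chA, cT, sT. field. repeat split; nra. }
  rewrite E. split; intro h.
  - apply Rdiv_lt_0_compat; [apply Rmult_lt_0_compat|]; lra.
  - assert (0 < (chA x y z - 1) * Dn) by lra.
    destruct (Rle_or_lt (chA x y z) 1) as [h'|h']; [|exact h'].
    nra.
Qed.

Lemma angle_sum_bound t u s : 0 < t -> 0 < u -> 0 < s ->
  1 < chA t u s -> 1 < chA s t u -> 0 < 1 - t*u - u*s - s*t.
Proof.
  intros ht hu hs h1 h3.
  apply chA_gt1_iff in h1; [|lra..]. apply chA_gt1_iff in h3; [|lra..].
  destruct (Rle_or_lt (1 - t*u - u*s - s*t) 0) as [h|h]; [|exact h].
  assert (1 - u*s + t*u + t*s < 0) by nra.
  assert (1 - t*u + s*t + s*u < 0) by nra.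
  nra.
Qed.

Lemma angle_half_tangent a b c : htri a b c ->
  0 < rparam (alpha a b c) /\ cos (alpha a b c) = cT (rparam (alpha a b c)) /\
  sin (alpha a b c) = sT (rparam (alpha a b c)).
Proof. intros H. apply half_angle, angle_cos_sin, H. Qed.

Lemma cosh_side a b c : htri a b c ->
  cosh a = chA (rparam (alpha a b c)) (rparam (beta a b c)) (rparam (gamma a b c)).
Proof.
  intros H.
  destruct (angle_half_tangent a b c H) as (_ & ca & _).
  destruct (angle_half_tangent b c a (htri_rot _ _ _ H)) as (tb & cb & sb).
  destruct (angle_half_tangent c a b (htri_rot _ _ _ (htri_rot _ _ _ H))) as (tc & cc & sc).
  change (alpha b c a) with (beta a b c) in tb, cb, sb.
  change (alpha c a b) with (gamma a b c) in tc, cc, sc.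
  pose proof (sT_pos _ tb). pose proof (sT_pos _ tc).
  unfold chA. rewrite <- ca, <- cb, <- cc, <- sb, <- sc, <- (dual_law a b c H).
  field. rewrite sb, sc. nra.
Qed.

Lemma sum3 x y z t u s : 0 < cos x -> 0 < cos y -> 0 < cos z ->
  tan x = t -> tan y = u -> tan z = s ->
  cos (x + y + z) = cos x * cos y * cos z * (1 - t*u - u*s - s*t) /\
  sin (x + y + z) = cos x * cos y * cos z * (t + u + s - t*u*s).
Proof.
  intros hx hy hz tx ty tz.
  assert (sx : sin x = t * cos x) by (rewrite <- tx; unfold tan; field; lra).
  assert (sy : sin y = u * cos y) by (rewrite <- ty; unfold tan; field; lra).
  assert (sz : sin z = s * cos z) by (rewrite <- tz; unfold tan; field; lra).
  repeat rewrite ?cos_plus, ?sin_plus. rewrite sx, sy, sz. split; ring.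
Qed.

Lemma area_relation x y z t u s m : 0 < cos x -> 0 < cos y -> 0 < cos z ->
  tan x = t -> tan y = u -> tan z = s -> 0 < m -> tan (PI / 2 - (x + y + z)) = m ->
  m * (t + u + s - t*u*s) = 1 - t*u - u*s - s*t.
Proof.
  intros hx hy hz tx ty tz hm H.
  destruct (sum3 x y z t u s hx hy hz tx ty tz) as [c3 s3].
  unfold tan in H. rewrite sin_shift, cos_shift in H.
  assert (hc : 0 < cos x * cos y * cos z) by (repeat apply Rmult_lt_0_compat; lra).
  destruct (Req_dec (sin (x + y + z)) 0) as [h0|h0].
  - rewrite h0, Rdiv_0_r in H. lra.
  - assert (H2 : m * sin (x + y + z) = cos (x + y + z)) by (rewrite <- H; field; auto).
    rewrite c3, s3 in H2.
    apply (Rmult_eq_reg_l (cos x * cos y * cos z)); [|lra]. rewrite <- H2. ring.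
Qed.

(* The third half-angle tangent as a function of the first, given the area
   parameter m and the second one u. *)
Definition sfun (m u t : R) : R := (1 - t*u - m*(t + u)) / (m*(1 - t*u) + t + u).

Lemma third_param m u t s : 0 < m -> 0 < t -> 0 < u -> 0 < s ->
  0 < 1 - t*u - u*s - s*t -> m * (t + u + s - t*u*s) = 1 - t*u - u*s - s*t ->
  0 < m*(1 - t*u) + t + u /\ s = sfun m u t /\ t * (m + u) < 1 - m*u.
Proof.
  intros hm ht hu hs hE hR.
  assert (hD : 0 < m*(1 - t*u) + t + u) by nra.
  assert (hsD : s * (m*(1 - t*u) + t + u) = 1 - t*u - m*(t + u)) by nra.
  repeat split; [exact hD | | nra].
  unfold sfun. rewrite <- hsD. field. lra.
Qed.

Lemma heron_params m u a b c : 0 < m -> heron_mu m u a b c ->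
  0 < u /\ 0 < rparam (alpha a b c) /\
  rparam (alpha a b c) * (m + u) < 1 - m*u /\
  rparam (gamma a b c) = sfun m u (rparam (alpha a b c)).
Proof.
  intros hm ((H & _) & hA & hB).
  pose proof (htri_rot _ _ _ H) as H'. pose proof (htri_rot _ _ _ H') as H''.
  destruct (angle_cos_sin _ _ _ H) as (_ & _ & ba).
  destruct (angle_cos_sin _ _ _ H') as (_ & _ & bb).
  destruct (angle_cos_sin _ _ _ H'') as (_ & _ & bc).
  destruct (half_angle _ ba) as (ht & _). destruct (half_angle _ bb) as (hu & _).
  destruct (half_angle _ bc) as (hs & _).
  fold (alpha a b c) (beta a b c) (gamma a b c) in *.
  assert (hE : 0 < 1 - rparam (alpha a b c) * u - u * rparam (gamma a b c)
                 - rparam (gamma a b c) * rparam (alpha a b c)).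
  { rewrite <- hB. apply angle_sum_bound; try assumption.
    - rewrite <- (cosh_side a b c H). apply cosh_gt1, H.
    - pose proof (cosh_gt1 c ltac:(apply H'')) as hc.
      rewrite (cosh_side c a b H'') in hc. exact hc. }
  assert (hR : m * (rparam (alpha a b c) + u + rparam (gamma a b c)
                    - rparam (alpha a b c) * u * rparam (gamma a b c)) =
               1 - rparam (alpha a b c) * u - u * rparam (gamma a b c)
                 - rparam (gamma a b c) * rparam (alpha a b c)).
  { apply (area_relation (alpha a b c / 2) (beta a b c / 2) (gamma a b c / 2));
      try (apply cos_gt_0; lra); auto.
    rewrite <- hA. unfold rparam, harea. f_equal. field. }
  assert (hu' : 0 < u) by (rewrite <- hB; exact hu).
  destruct (third_param m u _ _ hm ht hu' hs hE hR) as (_ & hs' & hA').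
  repeat split; assumption.
Qed.

Lemma heron_trig m u a b c : 0 < m -> heron_mu m u a b c ->
  cos (alpha a b c) = cT (rparam (alpha a b c)) /\
  sin (alpha a b c) = sT (rparam (alpha a b c)) /\
  sin (beta a b c) = sT u /\
  sin (gamma a b c) = sT (sfun m u (rparam (alpha a b c))) /\
  cosh a = chA (rparam (alpha a b c)) u (sfun m u (rparam (alpha a b c))) /\
  cosh b = chA u (sfun m u (rparam (alpha a b c))) (rparam (alpha a b c)) /\
  cosh c = chA (sfun m u (rparam (alpha a b c))) (rparam (alpha a b c)) u.
Proof.
  intros hm H. destruct (heron_params m u a b c hm H) as (_ & _ & _ & hs).
  destruct H as ((Ht & _) & _ & hB). rewrite <- hs, <- hB.
  pose proof (htri_rot _ _ _ Ht) as Ht'. pose proof (htri_rot _ _ _ Ht') as Ht''.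
  destruct (angle_half_tangent _ _ _ Ht) as (_ & ca & sa).
  destruct (angle_half_tangent _ _ _ Ht') as (_ & _ & sb).
  destruct (angle_half_tangent _ _ _ Ht'') as (_ & _ & sc).
  repeat split; try assumption.
  - exact (cosh_side a b c Ht).
  - exact (cosh_side b c a Ht').
  - exact (cosh_side c a b Ht'').
Qed.

(* Q(t) is (m^2+1)^2 (u^2+1)^2 (t^2+1)^2 times
   (cosh(a)^2 - 1) (sin(beta) sin(gamma))^2 written through chA. *)
Lemma Qmu_chA m u t : m*(1 - t*u) + t + u <> 0 ->
  ((m^2 + 1) * (u^2 + 1) * (t^2 + 1))^2 *
  ((cT t + cT u * cT (sfun m u t))^2 - (sT u * sT (sfun m u t))^2) = Qmu m u t.
Proof. intros. unfold sfun, cT, sT, Qmu. field. repeat split; auto; nra. Qed.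

Lemma heron_w m u a b c : 0 < m -> heron_mu m u a b c ->
  0 < wtri m u a b c /\ Qmu m u (rparam (alpha a b c)) = wtri m u a b c ^ 2.
Proof.
  intros hm H.
  destruct (heron_params m u a b c hm H) as (hu & ht & hA & _).
  destruct (heron_trig m u a b c hm H) as (_ & _ & sb & sc & cha & _).
  destruct H as ((Htri & _) & _).
  set (t := rparam (alpha a b c)) in *. set (s := sfun m u t) in *.
  assert (hD : 0 < m*(1 - t*u) + t + u) by nra.
  assert (hs : 0 < s) by (unfold s, sfun; apply Rdiv_lt_0_compat; nra).
  assert (0 < sinh a) by (apply sinh_pos, Htri).
  pose proof (sT_pos u hu). pose proof (sT_pos s hs).
  set (P := (m^2 + 1) * (u^2 + 1) * (t^2 + 1)).
  assert (hP : 0 < P) by (unfold P; repeat apply Rmult_lt_0_compat; nra).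
  replace (wtri m u a b c) with (P * sinh a * (sT u * sT s))
    by (unfold wtri; fold t; rewrite sb, sc; unfold P; ring).
  split.
  - apply Rmult_lt_0_compat; apply Rmult_lt_0_compat; assumption.
  - rewrite <- (Qmu_chA m u t) by lra. fold s P.
    replace ((P * sinh a * (sT u * sT s)) ^ 2) with (P^2 * (sinh a ^ 2 * (sT u * sT s)^2))
      by ring.
    f_equal. rewrite sinh_sq, cha. unfold chA. field. nra.
Qed.

Lemma heron_to_curve m u a b c : IsRatR m -> IsRatR u -> 0 < m -> heron_mu m u a b c ->
  IsRatR (rparam (alpha a b c)) /\ condA m u (rparam (alpha a b c)) /\
  IsRatR (wtri m u a b c) /\ 0 < wtri m u a b c /\
  Qmu m u (rparam (alpha a b c)) = wtri m u a b c ^ 2.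
Proof.
  intros hmq huq hm H.
  destruct (heron_w m u a b c hm H) as [wp wQ].
  destruct (heron_params m u a b c hm H) as (hu & ht & hA & _).
  destruct (heron_trig m u a b c hm H) as (ca & sa & _).
  destruct H as ((_ & la & _ & _ & [ra1 ra2] & [rb1 rb2] & [rg1 rg2] & _) & _).
  set (t := rparam (alpha a b c)) in *.
  assert (Et : t = sin (alpha a b c) / (1 + cos (alpha a b c))).
  { rewrite sa, ca. unfold sT, cT. field. split; nra. }
  assert (IsRatR t) by (rewrite Et; rational).
  repeat split; try assumption.
  - apply (Rmult_lt_reg_r (m + u)); [lra|].
    replace ((1 - m*u) / (m + u) * (m + u)) with (1 - m*u) by (field; lra). lra.
  - unfold wtri. fold t. rewrite sinh_sh. unfold sh. rational.
Qed.

Lemma heron_inj m u a b c a' b' c' : 0 < m ->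
  heron_mu m u a b c -> heron_mu m u a' b' c' ->
  rparam (alpha a b c) = rparam (alpha a' b' c') -> a = a' /\ b = b' /\ c = c'.
Proof.
  intros hm H H' E.
  destruct (heron_trig m u a b c hm H) as (_ & _ & _ & _ & ha & hb & hc).
  destruct (heron_trig m u a' b' c' hm H') as (_ & _ & _ & _ & ha' & hb' & hc').
  rewrite E in ha, hb, hc.
  destruct H as ((Ht & _) & _). destruct H' as ((Ht' & _) & _). unfold htri in Ht, Ht'.
  repeat split; apply cosh_inj; try lra; congruence.
Qed.

Lemma params_of_condA m u t : 0 < m -> 0 < u -> m*u < 1 -> condA m u t ->
  0 < sfun m u t /\ m*(1 - t*u) + t + u <> 0 /\
  1 < chA t u (sfun m u t) /\ 1 < chA u (sfun m u t) t /\ 1 < chA (sfun m u t) t u /\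
  m * (t + u + sfun m u t - t*u*sfun m u t) =
    1 - t*u - u*sfun m u t - sfun m u t*t.
Proof.
  intros hm hu hmu [ht hA].
  apply (Rmult_lt_compat_r (m + u)) in hA; [|lra].
  replace ((1 - m*u) / (m + u) * (m + u)) with (1 - m*u) in hA by (field; lra).
  assert (hD : 0 < m*(1 - t*u) + t + u) by nra.
  set (D := m*(1 - t*u) + t + u) in *. set (s := sfun m u t).
  assert (hs : 0 < s) by (unfold s, sfun; apply Rdiv_lt_0_compat; fold D; nra).
  assert (hE : (1 - t*u - u*s - s*t) * D = m * (1 + t^2) * (1 + u^2))
    by (unfold s, sfun, D; field; fold D; lra).
  assert (hFa : (1 - u*s + t*u + t*s) * D = (1 + u^2) * (m*(1 - t^2) + 2*t))
    by (unfold s, sfun, D; field; fold D; lra).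
  assert (hFb : (1 - s*t + u*s + u*t) * D = (1 + t^2) * (m*(1 - u^2) + 2*u))
    by (unfold s, sfun, D; field; fold D; lra).
  assert (pos_factor : forall f g, 0 < g -> f * D = g -> 0 < f).
  { intros f g hg hf. apply (Rmult_lt_reg_r D); lra. }
  assert (ht2 : 0 < 1 + t^2) by nra. assert (hu2 : 0 < 1 + u^2) by nra.
  assert (hmt : 0 < m*(1 - t^2) + 2*t).
  { assert (0 < (1 - m*t) * t) by (apply Rmult_lt_0_compat; nra). nra. }
  assert (hmu2 : 0 < m*(1 - u^2) + 2*u).
  { assert (0 < (1 - m*u) * u) by (apply Rmult_lt_0_compat; nra). nra. }
  assert (E : 0 < 1 - t*u - u*s - s*t).
  { eapply pos_factor; [|exact hE]. repeat apply Rmult_lt_0_compat; lra. }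
  assert (Fa : 0 < 1 - u*s + t*u + t*s).
  { eapply pos_factor; [|exact hFa]. apply Rmult_lt_0_compat; lra. }
  assert (Fb : 0 < 1 - s*t + u*s + u*t).
  { eapply pos_factor; [|exact hFb]. apply Rmult_lt_0_compat; lra. }
  repeat split; try lra.
  - apply chA_gt1_iff; try lra. apply Rmult_lt_0_compat; lra.
  - apply chA_gt1_iff; try lra. apply Rmult_lt_0_compat; lra.
  - apply chA_gt1_iff; try lra. apply Rmult_lt_0_compat; nra.
  - unfold s, sfun, D. field. fold D. lra.
Qed.

(* Algebraic identities expressing sinh of two sides, and the law of cosines
   at the third, through chA. *)
Definition Gf (x y z : R) : R := (chA x y z ^ 2 - 1) * sT y * sT z / sT x ^ 2.

Lemma chA_sinh_prod x y z : x <> 0 -> y <> 0 -> z <> 0 ->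
  (chA y z x ^ 2 - 1) * (chA z x y ^ 2 - 1) = Gf x y z ^ 2.
Proof. intros. unfold Gf, chA, cT, sT. field. repeat split; nra. Qed.

Lemma chA_lawcos x y z : x <> 0 -> y <> 0 -> z <> 0 ->
  chA y z x * chA z x y - chA x y z = cT x * Gf x y z.
Proof. intros. unfold Gf, chA, cT, sT. field. repeat split; nra. Qed.

Lemma chA_sines x y z : x <> 0 -> y <> 0 -> z <> 0 ->
  (chA y z x ^ 2 - 1) * sT x ^ 2 = (chA x y z ^ 2 - 1) * sT y ^ 2.
Proof. intros. unfold chA, cT, sT. field. repeat split; nra. Qed.

Definition side_of (x y z : R) : R := acosh (chA x y z).

Lemma lawcos_side_of x y z : 0 < x -> 0 < y -> 0 < z ->
  1 < chA x y z -> 1 < chA y z x -> 1 < chA z x y ->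
  lawcos (side_of x y z) (side_of y z x) (side_of z x y) = cT x.
Proof.
  intros hx hy hz h1 h2 h3. unfold lawcos, side_of.
  destruct (acosh_spec _ h1) as (_ & -> & _).
  destruct (acosh_spec _ h2) as (_ & -> & -> & _).
  destruct (acosh_spec _ h3) as (_ & -> & -> & _).
  pose proof (sT_pos x hx). pose proof (sT_pos y hy). pose proof (sT_pos z hz).
  assert (hG : 0 < Gf x y z).
  { unfold Gf. apply Rdiv_lt_0_compat; [|nra].
    apply Rmult_lt_0_compat; [apply Rmult_lt_0_compat|]; nra. }
  rewrite <- sqrt_mult by nra. rewrite chA_sinh_prod, sqrt_pow2, chA_lawcos by lra.
  field. lra.
Qed.

Lemma lt_sum_of_lawcos a b c : 0 < b -> 0 < c -> -1 < lawcos a b c -> a < b + c.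
Proof.
  intros hb hc hk. unfold lawcos in hk.
  pose proof (sinh_pos b hb). pose proof (sinh_pos c hc).
  assert (hp : 0 < sinh b * sinh c) by (apply Rmult_lt_0_compat; lra).
  assert (cosh a < cosh (b + c)).
  { rewrite cosh_plus. apply (Rmult_lt_compat_r (sinh b * sinh c)) in hk; [|lra].
    replace ((cosh b * cosh c - cosh a) / (sinh b * sinh c) * (sinh b * sinh c))
      with (cosh b * cosh c - cosh a) in hk by (field; split; lra). lra. }
  destruct (Rlt_or_le a (b + c)) as [h|h]; [exact h|].
  destruct h as [h|h]; [pose proof (cosh_lt (b + c) a ltac:(lra) h)|subst]; lra.
Qed.

Lemma triangle_of_angles x y z : 0 < x -> 0 < y -> 0 < z ->
  1 < chA x y z -> 1 < chA y z x -> 1 < chA z x y ->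
  let a := side_of x y z in let b := side_of y z x in let c := side_of z x y in
  htri a b c /\ alpha a b c = 2 * atan x /\ beta a b c = 2 * atan y /\
  gamma a b c = 2 * atan z.
Proof.
  intros hx hy hz h1 h2 h3 a b c.
  destruct (acosh_spec _ h1) as (ha & _). destruct (acosh_spec _ h2) as (hb & _).
  destruct (acosh_spec _ h3) as (hc & _).
  pose proof (lawcos_side_of x y z hx hy hz h1 h2 h3) as kx.
  pose proof (lawcos_side_of y z x hy hz hx h2 h3 h1) as ky.
  pose proof (lawcos_side_of z x y hz hx hy h3 h1 h2) as kz.
  fold a b c in kx, ky, kz.
  assert (angle : forall v, 0 < v -> acos (cT v) = 2 * atan v).
  { intros v hv. destruct (double_atan v) as [e _]. rewrite <- e.
    apply acos_cos. pose proof (atan_pos v hv). lra. }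
  repeat split; try assumption.
  - apply lt_sum_of_lawcos; try assumption. rewrite kx. apply cT_gt_m1.
  - apply lt_sum_of_lawcos; try assumption. rewrite ky. apply cT_gt_m1.
  - apply lt_sum_of_lawcos; try assumption. rewrite kz. apply cT_gt_m1.
  - change (acos (lawcos a b c) = 2 * atan x). rewrite kx. now apply angle.
  - change (acos (lawcos b c a) = 2 * atan y). rewrite ky. now apply angle.
  - change (acos (lawcos c a b) = 2 * atan z). rewrite kz. now apply angle.
Qed.

Lemma sqrt_eq x y : 0 <= y -> x = y ^ 2 -> sqrt x = y.
Proof. intros h ->. now apply sqrt_pow2. Qed.

(* By the law of sines, sinh of one side determines sinh of the next. *)
Lemma sinh_side_sines x y z : 0 < x -> 0 < y -> 0 < z -> 1 < chA x y z ->
  sqrt (chA y z x ^ 2 - 1) = sqrt (chA x y z ^ 2 - 1) * sT y / sT x.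
Proof.
  intros hx hy hz h. pose proof (sT_pos x hx). pose proof (sT_pos y hy).
  apply sqrt_eq.
  - apply Rle_mult_inv_pos; [apply Rmult_le_pos; [apply sqrt_pos|]|]; lra.
  - apply (Rmult_eq_reg_r (sT x ^ 2)); [|nra].
    rewrite chA_sines by lra.
    replace ((sqrt (chA x y z ^ 2 - 1) * sT y / sT x) ^ 2 * sT x ^ 2) with
      (sqrt (chA x y z ^ 2 - 1) ^ 2 * sT y ^ 2) by (field; lra).
    rewrite pow2_sqrt by nra. reflexivity.
Qed.

Lemma rat_len_side_of x y z : IsRatR x -> IsRatR y -> IsRatR z -> 1 < chA x y z ->
  IsRatR (sqrt (chA x y z ^ 2 - 1)) -> rat_len (side_of x y z).
Proof.
  intros. unfold rat_len, side_of. destruct (acosh_spec _ H2) as (_ & _ & _ & ->).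
  apply rat_add; [|assumption]. unfold chA, cT, sT. rational.
Qed.

Lemma area_of_angles x y z m : 0 < x -> 0 < y -> 0 < z -> 0 < m ->
  0 < 1 - x*y - y*z - z*x -> m * (x + y + z - x*y*z) = 1 - x*y - y*z - z*x ->
  tan ((PI - 2 * atan x - 2 * atan y - 2 * atan z) / 2) = m /\
  cos (PI - 2 * atan x - 2 * atan y - 2 * atan z) = cT m /\
  sin (PI - 2 * atan x - 2 * atan y - 2 * atan z) = sT m.
Proof.
  intros hx hy hz hm hE hR.
  set (sg := atan x + atan y + atan z).
  replace (PI - 2 * atan x - 2 * atan y - 2 * atan z) with (2 * (PI / 2 - sg))
    by (unfold sg; field).
  replace (2 * (PI / 2 - sg) / 2) with (PI / 2 - sg) by field.
  assert (hcos : forall v, 0 < v -> 0 < cos (atan v))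
    by (intros v hv; apply cos_gt_0; pose proof (atan_pos v hv); lra).
  destruct (sum3 (atan x) (atan y) (atan z) x y z (hcos x hx) (hcos y hy) (hcos z hz)
              (tan_atan x) (tan_atan y) (tan_atan z)) as [cs ss].
  fold sg in cs, ss.
  assert (hc : 0 < cos (atan x) * cos (atan y) * cos (atan z))
    by (repeat apply Rmult_lt_0_compat; auto).
  assert (hq : 0 < x + y + z - x*y*z) by nra.
  assert (ht : tan (PI / 2 - sg) = m).
  { unfold tan. rewrite sin_shift, cos_shift, cs, ss, <- hR. field. nra. }
  destruct (double_angle_tan (PI / 2 - sg)) as [h1 h2].
  { rewrite cos_shift, ss. nra. }
  rewrite ht in h1, h2. auto.
Qed.

Lemma curve_to_heron m u t w : IsRatR m -> IsRatR u -> 0 < m -> 0 < u -> m*u < 1 ->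
  IsRatR t -> IsRatR w -> condA m u t -> 0 < w -> Qmu m u t = w ^ 2 ->
  exists a b c, heron_mu m u a b c /\ rparam (alpha a b c) = t.
Proof.
  intros hmq huq hm hu hmu htq hwq hA hw hQ. pose proof hA as [ht _].
  destruct (params_of_condA m u t hm hu hmu hA) as (hs & hD & h1 & h2 & h3 & hR).
  set (s := sfun m u t) in *.
  assert (hsq : IsRatR s) by (unfold s, sfun; rational).
  pose proof (sT_pos u hu). pose proof (sT_pos s hs).
  set (P := (m^2 + 1) * (u^2 + 1) * (t^2 + 1)).
  assert (hP : 0 < P) by (unfold P; repeat apply Rmult_lt_0_compat; nra).
  assert (SA : sqrt (chA t u s ^ 2 - 1) = w / (P * sT u * sT s)).
  { assert (0 < P * sT u * sT s) by (apply Rmult_lt_0_compat; [apply Rmult_lt_0_compat|]; lra).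
    apply sqrt_eq; [left; apply Rdiv_lt_0_compat; lra|].
    replace ((w / (P * sT u * sT s)) ^ 2) with (w ^ 2 / (P * sT u * sT s) ^ 2)
      by (field; lra).
    rewrite <- hQ, <- (Qmu_chA m u t hD). fold s P. unfold chA.
    field. repeat split; lra. }
  assert (rA : IsRatR (sqrt (chA t u s ^ 2 - 1))) by (rewrite SA; unfold P; rational).
  assert (rB : IsRatR (sqrt (chA u s t ^ 2 - 1)))
    by (rewrite sinh_side_sines by lra; apply rat_div; [apply rat_mul|]; auto using rat_sT).
  assert (rC : IsRatR (sqrt (chA s t u ^ 2 - 1)))
    by (rewrite sinh_side_sines by lra; apply rat_div; [apply rat_mul|]; auto using rat_sT).
  destruct (triangle_of_angles t u s ht hu hs h1 h2 h3) as (Htri & A & B & C).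
  destruct (area_of_angles t u s m ht hu hs hm ltac:(apply angle_sum_bound; lra) hR)
    as (Am & Ac & As).
  destruct (double_atan t) as [ct st]. destruct (double_atan u) as [cu su].
  destruct (double_atan s) as [cs ss].
  exists (side_of t u s), (side_of u s t), (side_of s t u).
  unfold heron_mu, heron, rat_ang, harea, rparam. rewrite A, B, C.
  replace (2 * atan t / 2) with (atan t) by field.
  replace (2 * atan u / 2) with (atan u) by field.
  rewrite ct, st, cu, su, cs, ss, Ac, As, Am, !tan_atan.
  unfold htri in Htri.
  repeat split; auto using rat_len_side_of, rat_cT, rat_sT; lra.
Qed.

(* The map (t, w) |-> (x, y): x is affine in w, and y lies on the line
   y = ylin t x of parameter t through the point P of E. *)
Definition xbase (m u t : R) : R :=
  Kmu m u / (4 * t ^ 2) *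
  (- 4 * (m * u - 1) * (m + u) * m * t
   + 2 * (m ^ 2 * u ^ 2 + m ^ 2 - 2 * m * u + 2) * m * t ^ 2 + 2 * Kmu m u * m ^ 2).
Definition xslope (m u t : R) : R := Kmu m u * m / (4 * t ^ 2).
Definition ylin (m u t x : R) : R :=
  - m * Kmu m u * (x - cmu m u) / t - (m + u) * (1 - m * u) * (x - nmu m u).

Lemma xfun_affine m u t w : xfun m u t w = xbase m u t + xslope m u t * w.
Proof. unfold xfun, xbase, xslope, Rdiv. ring. Qed.

Lemma wfun_affine m u x y : m <> 0 -> Kmu m u <> 0 -> tfun m u x y <> 0 ->
  wfun m u x y = (x - xbase m u (tfun m u x y)) / xslope m u (tfun m u x y).
Proof. intros. unfold wfun, xbase, xslope. field. auto. Qed.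

Lemma lineL_ylin m u t x : t <> 0 ->
  lineL m u x (ylin m u t x) = - m * Kmu m u * (x - cmu m u) / t.
Proof. intros. unfold lineL, ylin. field. auto. Qed.

(* Chord identity: for every x, the line of parameter t through P meets E at
   x = cmu (the point P) and where (x - xbase)^2 = xslope^2 Q(t). *)
Lemma chord_identity m u t x : t <> 0 ->
  ylin m u t x ^ 2 - x * (x - nmu m u) * (x - nmu m u * (u ^ 2 + 1)) =
  - (x - cmu m u) * ((x - xbase m u t) ^ 2 - xslope m u t ^ 2 * Qmu m u t).
Proof. intros. unfold ylin, xbase, xslope, Qmu, cmu, nmu, Kmu. field. auto. Qed.

Lemma Kmu_pos m u : 0 < m -> 0 < u -> m * u < 1 -> 0 < Kmu m u.
Proof. intros. unfold Kmu. nra. Qed.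

Lemma quartic_to_E m u t w : 0 < m -> 0 < u -> m * u < 1 -> t <> 0 ->
  w ^ 2 = Qmu m u t ->
  onE m u (xfun m u t w) (yfun m u t w) /\
  (lineL m u (xfun m u t w) (yfun m u t w) <> 0 ->
     tfun m u (xfun m u t w) (yfun m u t w) = t /\
     wfun m u (xfun m u t w) (yfun m u t w) = w).
Proof.
  intros hm hu hmu ht hw. pose proof (Kmu_pos m u hm hu hmu) as hK.
  assert (hy : yfun m u t w = ylin m u t (xfun m u t w)) by reflexivity.
  rewrite hy. set (x := xfun m u t w).
  assert (hx : x = xbase m u t + xslope m u t * w) by apply xfun_affine.
  split.
  - unfold onE. apply Rminus_diag_uniq. rewrite chord_identity by exact ht.
    rewrite hx, <- hw. ring.
  - rewrite lineL_ylin by exact ht. intros hL.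
    assert (hxc : x - cmu m u <> 0) by (intro h0; apply hL; rewrite h0; field; exact ht).
    assert (hT : tfun m u x (ylin m u t x) = t).
    { unfold tfun. rewrite lineL_ylin by exact ht. field. repeat split; auto; lra. }
    split; [exact hT|].
    rewrite wfun_affine, hT, hx by (try rewrite hT; lra).
    unfold xslope. field. split; lra.
Qed.

Lemma E_to_quartic m u x y : 0 < m -> 0 < u -> m * u < 1 ->
  onE m u x y -> lineL m u x y <> 0 -> tfun m u x y <> 0 ->
  wfun m u x y ^ 2 = Qmu m u (tfun m u x y) /\
  xfun m u (tfun m u x y) (wfun m u x y) = x /\
  yfun m u (tfun m u x y) (wfun m u x y) = y.
Proof.
  intros hm hu hmu hE hL hT. pose proof (Kmu_pos m u hm hu hmu) as hK.
  set (T := tfun m u x y) in *.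
  assert (hxc : x - cmu m u <> 0)
    by (intro h0; apply hT; unfold T, tfun; rewrite h0; field; exact hL).
  assert (hy : ylin m u T x = y)
    by (unfold ylin, T, tfun, lineL in *; field; repeat split; lra).
  assert (hT2 : 0 < T ^ 2) by (rewrite <- Rsqr_pow2; now apply Rsqr_pos_lt).
  assert (hS : xslope m u T <> 0).
  { apply Rgt_not_eq. unfold xslope.
    apply Rdiv_lt_0_compat; [apply Rmult_lt_0_compat|]; lra. }
  assert (hW : wfun m u x y = (x - xbase m u T) / xslope m u T)
    by (apply wfun_affine; [lra | lra | exact hT]).
  assert (hX : xfun m u T (wfun m u x y) = x)
    by (rewrite xfun_affine, hW; field; exact hS).
  assert (hyf : yfun m u T (wfun m u x y) = y).
  { change (ylin m u T (xfun m u T (wfun m u x y)) = y). now rewrite hX. }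
  repeat split; [|exact hX|exact hyf].
  pose proof (chord_identity m u T x hT) as C. rewrite hy in C.
  unfold onE in hE. rewrite hE, Rminus_diag in C.
  assert (Z : (x - xbase m u T) ^ 2 = xslope m u T ^ 2 * Qmu m u T).
  { symmetry in C. apply Rmult_integral in C. destruct C as [C|C]; lra. }
  rewrite hW.
  replace (((x - xbase m u T) / xslope m u T) ^ 2)
    with ((x - xbase m u T) ^ 2 / xslope m u T ^ 2) by (field; exact hS).
  rewrite Z. field. exact hS.
Qed.

(* The parameter t of the points of the quartic mapped to P. *)
Definition tP (m u : R) : R :=
  2 * m * Kmu m u * ((m + u) * (1 - m * u)) /
  ((m * Kmu m u) ^ 2 + (u * (m ^ 2 + 1)) ^ 2).

Lemma line_fiber m u t w : 0 < m -> 0 < u -> m * u < 1 -> t <> 0 ->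
  w ^ 2 = Qmu m u t -> xfun m u t w = cmu m u -> t = tP m u.
Proof.
  intros hm hu hmu ht hw hx.
  set (S := (m * Kmu m u) ^ 2 + (u * (m ^ 2 + 1)) ^ 2).
  assert (hS : 0 < S) by (unfold S; nra).
  assert (I : (cmu m u - xbase m u t) ^ 2 - xslope m u t ^ 2 * Qmu m u t =
              u ^ 2 * (m ^ 2 + 1) ^ 2 * (S * t - 2 * m * Kmu m u * ((m + u) * (1 - m * u))) / t).
  { unfold S, cmu, xbase, xslope, Qmu, Kmu. field. exact ht. }
  rewrite <- hx, xfun_affine, <- hw in I.
  replace ((xbase m u t + xslope m u t * w - xbase m u t) ^ 2 - xslope m u t ^ 2 * w ^ 2)
    with 0 in I by ring.
  assert (Z : S * t - 2 * m * Kmu m u * ((m + u) * (1 - m * u)) = 0).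
  { assert (hc : 0 < u ^ 2 * (m ^ 2 + 1) ^ 2) by (apply Rmult_lt_0_compat; nra).
    apply (Rmult_eq_reg_l (u ^ 2 * (m ^ 2 + 1) ^ 2 / t)).
    - rewrite Rmult_0_r, I. field. exact ht.
    - apply Rmult_integral_contrapositive. split; [lra | now apply Rinv_neq_0_compat]. }
  unfold tP. fold S. apply (Rmult_eq_reg_r S); [|lra]. field_simplify; lra.
Qed.

Lemma lineL_zero m u t x : 0 < m -> 0 < u -> m * u < 1 -> t <> 0 ->
  lineL m u x (ylin m u t x) = 0 -> x = cmu m u /\ ylin m u t x = Py m u.
Proof.
  intros hm hu hmu ht hL. pose proof (Kmu_pos m u hm hu hmu).
  rewrite lineL_ylin in hL by exact ht.
  assert (hx : x = cmu m u).
  { apply Rminus_diag_uniq. apply (Rmult_eq_reg_l (- m * Kmu m u / t)).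
    - rewrite Rmult_0_r, <- hL. field. exact ht.
    - apply Rmult_integral_contrapositive. split; [nra | now apply Rinv_neq_0_compat]. }
  split; [exact hx|]. rewrite hx. unfold ylin, Py, cmu, nmu, Kmu, Rdiv. ring.
Qed.

Lemma heron_to_E m u a b c : IsRatR m -> IsRatR u -> 0 < m -> 0 < u -> m * u < 1 ->
  heron_mu m u a b c ->
  IsRatR (Fx m u a b c) /\ IsRatR (Fy m u a b c) /\
  onE m u (Fx m u a b c) (Fy m u a b c) /\
  (good_point m u (Fx m u a b c) (Fy m u a b c) \/
   (Fx m u a b c = Px m u /\ Fy m u a b c = Py m u)).
Proof.
  intros hmq huq hm hu hmu H.
  destruct (heron_to_curve m u a b c hmq huq hm H) as (tq & tA & wq & wp & wQ).
  unfold Fx, Fy. set (t := rparam (alpha a b c)) in *. set (w := wtri m u a b c) in *.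
  assert (ht : t <> 0) by (destruct tA; lra).
  destruct (quartic_to_E m u t w hm hu hmu ht (eq_sym wQ)) as [hE hinv].
  assert (rx : IsRatR (xfun m u t w)) by (unfold xfun, Kmu; rational).
  assert (ry : IsRatR (yfun m u t w)) by (unfold yfun, Kmu, cmu, nmu; rational).
  repeat split; try assumption.
  destruct (Req_dec (lineL m u (xfun m u t w) (yfun m u t w)) 0) as [h0|h0].
  - right. exact (lineL_zero m u t _ hm hu hmu ht h0).
  - left. destruct (hinv h0) as [e1 e2]. unfold good_point.
    rewrite e1, e2. repeat split; assumption || apply tA.
Qed.

Lemma heron_to_E_inj m u a b c a' b' c' : IsRatR m -> IsRatR u ->
  0 < m -> 0 < u -> m * u < 1 -> heron_mu m u a b c -> heron_mu m u a' b' c' ->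
  Fx m u a b c = Fx m u a' b' c' -> Fy m u a b c = Fy m u a' b' c' ->
  a = a' /\ b = b' /\ c = c'.
Proof.
  intros hmq huq hm hu hmu H H' ex ey.
  apply (heron_inj m u a b c a' b' c' hm H H').
  destruct (heron_to_curve m u a b c hmq huq hm H) as (_ & [ht _] & _ & _ & wQ).
  destruct (heron_to_curve m u a' b' c' hmq huq hm H') as (_ & [ht' _] & _ & _ & wQ').
  unfold Fx, Fy in *.
  set (t := rparam (alpha a b c)) in *. set (w := wtri m u a b c) in *.
  set (t' := rparam (alpha a' b' c')) in *. set (w' := wtri m u a' b' c') in *.
  destruct (quartic_to_E m u t w hm hu hmu ltac:(lra) (eq_sym wQ)) as [_ hinv].
  destruct (quartic_to_E m u t' w' hm hu hmu ltac:(lra) (eq_sym wQ')) as [_ hinv'].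
  destruct (Req_dec (lineL m u (xfun m u t w) (yfun m u t w)) 0) as [h0|h0].
  - rewrite ex, ey in h0.
    destruct (lineL_zero m u t' _ hm hu hmu ltac:(lra) h0) as [hx' _].
    rewrite <- ex in hx'.
    rewrite (line_fiber m u t w), (line_fiber m u t' w'); auto; try lra; congruence.
  - destruct (hinv h0) as [e1 _]. rewrite ex, ey in h0.
    destruct (hinv' h0) as [e1' _]. rewrite <- e1, <- e1', ex, ey. reflexivity.
Qed.

Lemma good_point_to_heron m u x y : IsRatR m -> IsRatR u -> 0 < m -> 0 < u -> m * u < 1 ->
  good_point m u x y ->
  exists a b c, heron_mu m u a b c /\ Fx m u a b c = x /\ Fy m u a b c = y.
Proof.
  intros hmq huq hm hu hmu (xq & yq & hE & hL & hA & hW).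
  set (T := tfun m u x y) in *. set (W := wfun m u x y) in *.
  assert (hT : T <> 0) by (destruct hA; lra).
  destruct (E_to_quartic m u x y hm hu hmu hE hL hT) as (hQ & hx & hy).
  fold T W in hQ, hx, hy.
  assert (Tq : IsRatR T) by (unfold T, tfun, lineL, Kmu, cmu, nmu; rational).
  assert (Wq : IsRatR W) by (unfold W, wfun; fold T; unfold Kmu; rational).
  destruct (curve_to_heron m u T W hmq huq hm hu hmu Tq Wq hA hW (eq_sym hQ))
    as (a & b & c & H & hTa).
  destruct (heron_w m u a b c hm H) as [wp wQ]. rewrite hTa, <- hQ in wQ.
  assert (ew : wtri m u a b c = W) by nra.
  exists a, b, c. unfold Fx, Fy. rewrite hTa, ew. auto.
Qed.

Theorem theorem1 (m u : R) (Hmq : IsRatR m) (Huq : IsRatR u)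
  (Hm : 0 < m) (Hu : 0 < u) (Hmu : m * u < 1) :
  (* (i) the parameter t of alpha gives a bijection *)
  ((forall a b c, heron_mu m u a b c ->
      IsRatR (rparam (alpha a b c)) /\ condA m u (rparam (alpha a b c)) /\
      IsRatR (wtri m u a b c) /\ 0 < wtri m u a b c /\
      Qmu m u (rparam (alpha a b c)) = (wtri m u a b c) ^ 2) /\
   (forall a b c a' b' c', heron_mu m u a b c -> heron_mu m u a' b' c' ->
      rparam (alpha a b c) = rparam (alpha a' b' c') ->
      a = a' /\ b = b' /\ c = c') /\
   (forall t w, IsRatR t -> IsRatR w -> condA m u t -> 0 < w ->
      Qmu m u t = w ^ 2 ->
      exists a b c, heron_mu m u a b c /\ rparam (alpha a b c) = t)) /\
  (* (ii) birational map between w^2 = Q(t) and E *)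
  ((forall t w, t <> 0 -> w ^ 2 = Qmu m u t ->
      onE m u (xfun m u t w) (yfun m u t w) /\
      (lineL m u (xfun m u t w) (yfun m u t w) <> 0 ->
         tfun m u (xfun m u t w) (yfun m u t w) = t /\
         wfun m u (xfun m u t w) (yfun m u t w) = w)) /\
   (forall x y, onE m u x y -> lineL m u x y <> 0 -> tfun m u x y <> 0 ->
      (wfun m u x y) ^ 2 = Qmu m u (tfun m u x y) /\
      xfun m u (tfun m u x y) (wfun m u x y) = x /\
      yfun m u (tfun m u x y) (wfun m u x y) = y)) /\
  (* consequence: correspondence triangles <-> good points (plus possibly P) *)
  ((forall a b c, heron_mu m u a b c ->
      IsRatR (Fx m u a b c) /\ IsRatR (Fy m u a b c) /\
      onE m u (Fx m u a b c) (Fy m u a b c) /\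
      (good_point m u (Fx m u a b c) (Fy m u a b c) \/
       (Fx m u a b c = Px m u /\ Fy m u a b c = Py m u))) /\
   (forall a b c a' b' c', heron_mu m u a b c -> heron_mu m u a' b' c' ->
      Fx m u a b c = Fx m u a' b' c' -> Fy m u a b c = Fy m u a' b' c' ->
      a = a' /\ b = b' /\ c = c') /\
   (forall x y, good_point m u x y ->
      exists a b c, heron_mu m u a b c /\ Fx m u a b c = x /\ Fy m u a b c = y)).
Proof.
  split; [split; [|split] | split; [split | split; [|split]]].
  - intros a b c. now apply heron_to_curve.
  - intros a b c a' b' c'. now apply heron_inj.
  - intros t w. now apply curve_to_heron.
  - intros t w. now apply quartic_to_E.
  - intros x y. now apply E_to_quartic.
  - intros a b c. now apply heron_to_E.
  - intros a b c a' b' c'. now apply heron_to_E_inj.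
  - intros x y. now apply good_point_to_heron.
Qed.
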